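(* Let $(S,\mathfrak{n})$ be a complete Noetherian local ring with coefficient field $k$, $\Gamma$ a standard set of monomials in $k[T_1,\dots,T_r]$, and $I$ an $\mathfrak{n}$-primary ideal with a generating sequence $x_1,\dots,x_r$ which is $\Gamma$-expandable. Let $f_1,\dots,f_l\in S$ be such that their images form a $k$-basis of $S/I$. For a positive integer $t$ put $A_{1,t}=\{f_iu(x)\mid 1\le i\le l,\ u\in\Gamma,\ f_iu(x)\notin\mathfrak{n}^t\}$ and $A_{2,t}=\{f_iu(x)\mid 1\le i\le l,\ u\in\Gamma,\ \operatorname{ord}(f_i)+\sum_j\operatorname{ord}(x_j)\deg_{T_j}(u)<t\}$. Then: (1) $S/\mathfrak{n}^t$ is spanned over $k$ by the images of $A_{1,t}$; (2) $A_{1,t}\subseteq A_{2,t}$, so $S/\mathfrak{n}^t$ is spanned by the images of $A_{2,t}$; (3) if $A_{2,t}$ is $k$-linearly independent modulo $\mathfrak{n}^t$, then its image is a $k$-basis of $S/\mathfrak{n}^t$ and $\dim_kS/\mathfrak{n}^t=|A_{2,t}|$.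
   Context: $\operatorname{ord}(f)$ for $f\ne0$ is the integer $t$ with $f\in\mathfrak{n}^t\setminus\mathfrak{n}^{t+1}$ ($\infty$ for $f=0$). A standard set is a set of monomials closed under taking divisors. For $u=T_1^{a_1}\cdots T_r^{a_r}$, $u(x)=x_1^{a_1}\cdots x_r^{a_r}$. A lifting is a map $\sigma:S/I\to S$ with $\sigma(0)=0$ and $\pi\circ\sigma=\mathrm{id}_{S/I}$. $x_1,\dots,x_r$ is $\Gamma$-expandable if for every lifting $\sigma$ every $f\in S$ has a unique representation $f=\sum_{u\in\Gamma}f_uu(x)$ (convergent sum) with all $f_u\in\sigma(S/I)$. *)

From mathcomp Require Import all_boot all_order all_algebra.
From Stdlib Require Import ClassicalEpsilon.
Set Implicit Arguments. Unset Strict Implicit. Unset Printing Implicit Defensive.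
Import GRing.Theory.
Local Open Scope ring_scope.

Section Defs.
Variable S : comNzRingType.

Definition is_ideal (J : S -> Prop) : Prop :=
  [/\ J 0, (forall a b, J a -> J b -> J (a + b)) & (forall a b, J b -> J (a * b))].

Definition proper_ideal (J : S -> Prop) : Prop := is_ideal J /\ ~ J 1.

Fixpoint idpow (J : S -> Prop) (t : nat) : S -> Prop :=
  match t with
  | 0 => fun _ => True
  | t'.+1 => fun y => exists s : seq (S * S),
      (forall p, p \in s -> idpow J t' p.1 /\ J p.2) /\ y = \sum_(p <- s) p.1 * p.2
  end.

Definition is_local (n : S -> Prop) : Prop :=
  proper_ideal n /\ forall J, proper_ideal J -> forall a, J a -> n a.

Definition noetherian : Prop :=
  forall J : S -> Prop, is_ideal J -> exists g : seq S,
    forall y, J y <-> exists c : 'I_(size g) -> S, y = \sum_(i < size g) c i * g`_i.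

(* n-adically complete (and separated): S -> lim S/n^t is an isomorphism *)
Definition adic_complete (n : S -> Prop) : Prop :=
  (forall a : nat -> S,
     (forall t, exists N, forall m p, (N <= m)%N -> (N <= p)%N -> idpow n t (a m - a p)) ->
     exists L, forall t, exists N, forall m, (N <= m)%N -> idpow n t (a m - L))
  /\ (forall y, (forall t, idpow n t y) -> y = 0).

(* k is a coefficient field: iota : k -> S, and k -> S/n is bijective *)
Definition coefficient_field (k : fieldType) (iota : {rmorphism k -> S}) (n : S -> Prop) :=
  forall s : S, exists c : k, n (s - iota c) /\ forall c', n (s - iota c') -> c' = c.

Definition primary_ideal (I : S -> Prop) : Prop :=
  proper_ideal I /\ forall a b, I (a * b) -> ~ I a -> exists m, I (b ^+ m).
Definition is_primary_for (n I : S -> Prop) : Prop :=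
  primary_ideal I /\ forall a, n a <-> exists m, I (a ^+ m).

Definition generates (r : nat) (x : 'I_r -> S) (I : S -> Prop) : Prop :=
  forall y, I y <-> exists c : 'I_r -> S, y = \sum_(i < r) c i * x i.

Definition monomial (r : nat) := {ffun 'I_r -> nat}.
Definition mon_eval (r : nat) (u : monomial r) (x : 'I_r -> S) : S :=
  \prod_(i < r) x i ^+ u i.

Definition standard_set (r : nat) (G : monomial r -> Prop) : Prop :=
  forall u v : monomial r, G v -> (forall i, (u i <= v i)%N) -> G u.

(* liftings S/I -> S, represented as maps S -> S constant on classes mod I:
   sigma a = lifting of the class of a *)
Definition lifting (I : S -> Prop) (sigma : S -> S) : Prop :=
  [/\ forall a b, I (a - b) -> sigma a = sigma b,
      forall a, I (sigma a - a) & sigma 0 = 0].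

(* n-adically convergent sum over G (unconditional convergence) *)
Definition has_sum (n : S -> Prop) (r : nat) (G : monomial r -> Prop)
  (a : monomial r -> S) (f : S) : Prop :=
  forall t, exists F : seq (monomial r), (forall u, u \in F -> G u) /\
    forall H : seq (monomial r), uniq H -> (forall u, u \in H -> G u) ->
      {subset F <= H} -> idpow n t (f - \sum_(u <- H) a u).

Definition expandable (n I : S -> Prop) (r : nat) (x : 'I_r -> S)
  (G : monomial r -> Prop) : Prop :=
  forall sigma, lifting I sigma -> forall f : S,
    (exists fu : monomial r -> S, (forall u, G u -> exists s, fu u = sigma s) /\
        has_sum n G (fun u => fu u * mon_eval u x) f) /\
    (forall fu gu : monomial r -> S,
        (forall u, G u -> exists s, fu u = sigma s) ->
        (forall u, G u -> exists s, gu u = sigma s) ->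
        has_sum n G (fun u => fu u * mon_eval u x) f ->
        has_sum n G (fun u => gu u * mon_eval u x) f ->
        forall u, G u -> fu u = gu u).

(* ord : None stands for infinity *)
Definition ord (n : S -> Prop) (f : S) : option nat :=
  match excluded_middle_informative
          (exists t, idpow n t f /\ ~ idpow n t.+1 f) with
  | left H => Some (proj1_sig (constructive_indefinite_description _ H))
  | right _ => None
  end.

Definition oadd (a b : option nat) : option nat :=
  match a, b with Some a, Some b => Some (a + b)%N | _, _ => None end.
(* o * d with the convention infinity * 0 = 0 *)
Definition omuln (a : option nat) (d : nat) : option nat :=
  if d == 0%N then Some 0%N else
  match a with Some a => Some (a * d)%N | None => None end.

Definition spans_mod (k : fieldType) (iota : {rmorphism k -> S}) (J A : S -> Prop) :=
  forall s : S, exists cs : seq (k * S), (forall p, p \in cs -> A p.2) /\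
    J (s - \sum_(p <- cs) iota p.1 * p.2).
Definition indep_mod (k : fieldType) (iota : {rmorphism k -> S}) (J A : S -> Prop) :=
  forall (s : seq S) (c : S -> k), uniq s -> (forall a, a \in s -> A a) ->
    J (\sum_(a <- s) iota (c a) * a) -> forall a, a \in s -> c a = 0.
Definition basis_mod (k : fieldType) (iota : {rmorphism k -> S}) (J : S -> Prop) (s : seq S) :=
  [/\ uniq s, spans_mod iota J (fun a => a \in s) & indep_mod iota J (fun a => a \in s)].

Definition A1 (n : S -> Prop) (l r : nat) (f : 'I_l -> S) (x : 'I_r -> S)
  (G : monomial r -> Prop) (t : nat) (y : S) : Prop :=
  exists i u, G u /\ y = f i * mon_eval u x /\ ~ idpow n t (f i * mon_eval u x).

Definition A2 (n : S -> Prop) (l r : nat) (f : 'I_l -> S) (x : 'I_r -> S)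
  (G : monomial r -> Prop) (t : nat) (y : S) : Prop :=
  exists i u, G u /\ y = f i * mon_eval u x /\
    exists w, oadd (ord n (f i)) (\big[oadd/Some 0%N]_(j < r) omuln (ord n (x j)) (u j))
              = Some w /\ (w < t)%N.

End Defs.

(* Lift each class of S/I to its combination of the f_i.  Expandability then
   writes every element of S as an n-adically convergent sum of terms c f_i u(x)
   with c in k; truncating modulo n^t and discarding the terms that already lie
   in n^t gives (1).  Since f_i u(x) lies in n^w for
   w = ord f_i + sum_j ord(x_j) deg_j u, every element of A_1 is in A_2.  Each x_j
   lies in n, so ord x_j >= 1 and the monomials occurring in A_2 have all
   exponents below t: A_2 is finite, and if it is independent modulo n^t it is a
   basis, whose size is that of any other basis by the usual kernel-vector
   argument. *)
From mathcomp Require Import all_boot all_order all_algebra.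
From Stdlib Require Import ClassicalEpsilon.
From mathcomp Require Import ring.
Import GRing.Theory.
Set Implicit Arguments. Unset Strict Implicit.
Local Open Scope ring_scope.

Section Ideals.
Context {S : comNzRingType} {J : S -> Prop}.
Hypothesis idealJ : is_ideal J.

Lemma ideal0 : J 0.
Proof. by case: idealJ. Qed.

Lemma idealD {a b} : J a -> J b -> J (a + b).
Proof. by case: idealJ => _ JD _; apply: JD. Qed.

Lemma idealMl {a b} : J b -> J (a * b).
Proof. by case: idealJ => _ _ JM; apply: JM. Qed.

Lemma idealMr {a b} : J a -> J (a * b).
Proof. by rewrite mulrC; apply: idealMl. Qed.

Lemma idealN {a} : J a -> J (- a).
Proof. by rewrite -mulN1r; apply: idealMl. Qed.

Lemma idealB {a b} : J a -> J b -> J (a - b).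
Proof. by move=> Ja Jb; apply/idealD/idealN. Qed.

Lemma ideal_sum (I : Type) (s : seq I) (P : pred I) (F : I -> S) :
  (forall i, P i -> J (F i)) -> J (\sum_(i <- s | P i) F i).
Proof. by move=> JF; apply: (big_ind J) => // [|a b]; [apply: ideal0 | apply: idealD]. Qed.

End Ideals.

Section IdealPowers.
Context {S : comNzRingType} {n : S -> Prop}.

Lemma idpow_ideal t : is_ideal (idpow n t).
Proof.
elim: t => [|t IHt]; first by split.
split.
- by exists [::]; rewrite big_nil.
- move=> _ _ [s1 [s1P ->]] [s2 [s2P ->]]; exists (s1 ++ s2); rewrite big_cat.
  by split=> // p; rewrite mem_cat => /orP[/s1P | /s2P].
- move=> a _ [s [sP ->]]; exists [seq (a * p.1, p.2) | p <- s]; split.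
    by move=> _ /mapP[p /sP[p1 p2] ->]; split=> //; apply: idealMl.
  by rewrite big_map mulr_sumr; apply: eq_bigr => p _; rewrite mulrA.
Qed.

Lemma idpow_le p q y : (p <= q)%N -> idpow n q y -> idpow n p y.
Proof.
elim: q => [|q IHq]; first by rewrite leqn0 => /eqP ->.
rewrite leq_eqVlt => /orP[/eqP -> // | /IHq{}IHq] qy; apply: IHq.
move: qy => /= [s [sP ->]]; rewrite big_seq.
apply: (ideal_sum (idpow_ideal q)) => -[a b] /sP[/= qa _].
exact: (idealMr (idpow_ideal q) qa).
Qed.

Lemma idpowD p q a b : idpow n p a -> idpow n q b -> idpow n (p + q) (a * b).
Proof.
move=> pa; elim: q b => [|q IHq] b /=.
  by rewrite addn0 => _; apply: (idealMr (idpow_ideal p) pa).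
move=> [s [sP ->]]; rewrite addnS; exists [seq (a * p.1, p.2) | p <- s]; split.
  by move=> _ /mapP[p0 /sP[p1 p2] ->]; split=> //; apply: IHq.
by rewrite big_map mulr_sumr; apply: eq_bigr => p0 _; rewrite mulrA.
Qed.

Lemma idpowX w d a : idpow n w a -> idpow n (w * d) (a ^+ d).
Proof.
move=> wa; elim: d => [|d IHd]; first by rewrite muln0.
by rewrite exprS mulnS; apply: idpowD.
Qed.

Lemma idpow1 y : n y -> idpow n 1 y.
Proof.
move=> ny; exists [:: (1, y)]; split; last by rewrite big_seq1 mul1r.
by move=> p; rewrite inE => /eqP ->.
Qed.

End IdealPowers.

Section Order.
Context {S : comNzRingType} {n : S -> Prop}.

Lemma ord_Some a w : ord n a = Some w -> idpow n w a /\ ~ idpow n w.+1 a.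
Proof.
rewrite /ord; case: excluded_middle_informative => // ex.
by case: constructive_indefinite_description => w' ? [<-].
Qed.

Lemma ord_None a : ord n a = None -> forall t, idpow n t a.
Proof.
rewrite /ord; case: excluded_middle_informative => // noex _.
elim=> // t IHt; apply: NNPP => ta; apply: noex; by exists t.
Qed.

(* [idpowo o] is n^o for an extended order o, where n^oo is the intersection of all the n^t. *)
Definition idpowo (o : option nat) : S -> Prop :=
  if o is Some w then idpow n w else fun y => forall t, idpow n t y.

Lemma idpowo_ord a : idpowo (ord n a) a.
Proof.
by case E: (ord n a) => [w|] /=; [case: (ord_Some E) | apply: ord_None].
Qed.

Lemma ord_gt0 a w : n a -> ord n a = Some w -> (0 < w)%N.
Proof.
by case: w => // na /ord_Some[_ /(_ (idpow1 na))].
Qed.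

Lemma idpowo_oadd o1 o2 a b : idpowo o1 a -> idpowo o2 b -> idpowo (oadd o1 o2) (a * b).
Proof.
case: o1 o2 => [w1|] [w2|] /= a1 b2 => [|t|t|t]; first exact: idpowD.
- exact: (idealMl (idpow_ideal t) (b2 t)).
- exact: (idealMr (idpow_ideal t) (a1 t)).
- exact: (idealMr (idpow_ideal t) (a1 t)).
Qed.

Lemma idpowo_omuln a d : idpowo (omuln (ord n a) d) (a ^+ d).
Proof.
rewrite /omuln; case: eqP => [-> // | /eqP d0].
have := idpowo_ord a; case: (ord n a) => [w|] /= wa; first exact: idpowX.
move=> t; case: d d0 => // d _; rewrite exprS; exact: (idealMr (idpow_ideal t) (wa t)).
Qed.

Lemma idpowo_mon_eval r (x : 'I_r -> S) (u : monomial r) :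
  idpowo (\big[oadd/Some 0%N]_(j < r) omuln (ord n (x j)) (u j)) (mon_eval u x).
Proof.
apply: (big_ind2 idpowo) => // [o1 a o2 b|]; first exact: idpowo_oadd.
by move=> j _; apply: idpowo_omuln.
Qed.

Lemma A1_sub_A2 l r (f : 'I_l -> S) (x : 'I_r -> S) G t y :
  A1 n f x G t y -> A2 n f x G t y.
Proof.
case=> i [u [Gu [-> notin_t]]]; exists i, u; do 2!split => //.
have := idpowo_oadd (idpowo_ord (f i)) (idpowo_mon_eval x u).
case: oadd => [w|] /= w_fu; last by exfalso; apply/notin_t/w_fu.
by exists w; split=> //; rewrite ltnNge; apply: contra_notN notin_t => /idpow_le; apply.
Qed.

End Order.

Lemma big_oadd_Some (I : eqType) (s : seq I) (F : I -> option nat) v :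
  \big[oadd/Some 0%N]_(i <- s) F i = Some v ->
  forall i, i \in s -> exists2 vi, F i = Some vi & (vi <= v)%N.
Proof.
elim: s v => [//|a s IHs] v; rewrite big_cons.
case Ea: (F a) => [va|] //; case Es: (\big[_/_]_(i <- s) _) => [vs|] //= [<-] i.
rewrite inE => /predU1P[-> | /(IHs _ Es)[vi Fi le_vi_vs]]; first by exists va; rewrite ?leq_addr.
by exists vi; rewrite // (leq_trans le_vi_vs) ?leq_addl.
Qed.

Lemma exponent_le_order (S : comNzRingType) (n : S -> Prop) r (x : 'I_r -> S)
    (u : monomial r) o w :
  (forall j, n (x j)) ->
  oadd o (\big[oadd/Some 0%N]_(j < r) omuln (ord n (x j)) (u j)) = Some w ->
  forall j, (u j <= w)%N.
Proof.
move=> xn; case: o => [a|] //; case E: (\big[_/_]_(j < r) _) => [b|] //= [<-] j.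
have [v Ev le_vb] := big_oadd_Some E (mem_index_enum j).
apply: leq_trans (leq_addl a b); apply: leq_trans le_vb.
move: Ev; rewrite /omuln; case: eqP => [-> // | _].
by case Eo: ord => [c|] // [<-]; rewrite leq_pmull // (ord_gt0 (xn j) Eo).
Qed.

Lemma finite_pred_enum (T : eqType) (A : T -> Prop) (L : seq T) :
  (forall y, A y -> y \in L) -> exists s, uniq s /\ forall y, A y <-> y \in s.
Proof.
move=> AL; exists [seq y <- undup L | if excluded_middle_informative (A y) then true else false].
split=> [|y]; first by rewrite filter_uniq ?undup_uniq.
rewrite mem_filter mem_undup; case: excluded_middle_informative => //= Ay.
by split=> // _; apply: AL.
Qed.

Lemma A2_finite (S : comNzRingType) (n : S -> Prop) l r (f : 'I_l -> S) (x : 'I_r -> S) G t :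
  (forall j, n (x j)) ->
  exists s, uniq s /\ forall y, A2 n f x G t y <-> y \in s.
Proof.
move=> xn.
pose trunc (v : {ffun 'I_r -> 'I_t}) : monomial r := [ffun j => val (v j)].
apply: (finite_pred_enum (L := codom (fun p => f p.1 * mon_eval (trunc p.2) x))).
move=> _ [i [u [_ [-> [w [Ew lt_wt]]]]]].
have lt_ut j : (u j < t)%N := leq_ltn_trans (exponent_le_order xn Ew j) lt_wt.
have -> : u = trunc [ffun j => Ordinal (lt_ut j)] by apply/ffunP => j; rewrite !ffunE.
exact: (codom_f _ (i, _)).
Qed.

Lemma exists_nonzero_kernel_row (k : fieldType) m p (M : 'M[k]_(m, p)) :
  (p < m)%N -> exists2 v : 'rV[k]_m, v != 0 & v *m M = 0.
Proof.
move=> lt_pm; have : kermx M != 0.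
  by rewrite kermx_eq0 /row_free neq_ltn (leq_ltn_trans (rank_leq_col M)).
by case/rowV0Pn=> v /sub_kermxP vM0 v0; exists v.
Qed.

Section LinearAlgebraModIdeal.
Variables (k : fieldType) (S : comNzRingType) (iota : {rmorphism k -> S}).

Definition combination (A : S -> Prop) (y : S) : Prop :=
  exists cs : seq (k * S), (forall p, p \in cs -> A p.2) /\ y = \sum_(p <- cs) iota p.1 * p.2.

Lemma combination_scale A c a : A a -> combination A (iota c * a).
Proof.
by move=> Aa; exists [:: (c, a)]; rewrite big_seq1; split=> // p /[!inE] /eqP ->.
Qed.

Lemma combination_sum A (I : Type) (s : seq I) (P : pred I) (F : I -> S) :
  (forall i, P i -> combination A (F i)) -> combination A (\sum_(i <- s | P i) F i).
Proof.
move=> AF; apply: (big_ind (combination A)) => //; first by exists [::]; rewrite big_nil.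
move=> _ _ [cs1 [cs1A ->]] [cs2 [cs2A ->]]; exists (cs1 ++ cs2); rewrite big_cat.
by split=> // p; rewrite mem_cat => /orP[/cs1A | /cs2A].
Qed.

Lemma combination_nth (s : seq S) y :
  combination (fun a => a \in s) y ->
  exists d : 'I_(size s) -> k, y = \sum_(j < size s) iota (d j) * s`_j.
Proof.
case=> cs [cs_s ->{y}]; elim: cs cs_s => [|p cs IHcs] cs_s.
  by exists (fun=> 0); rewrite big_nil big1 // => j _; rewrite rmorph0 mul0r.
rewrite big_cons; have [|d ->] := IHcs; first by move=> q q_cs; apply: cs_s; rewrite inE q_cs orbT.
have lt_ps : (index p.2 s < size s)%N by rewrite index_mem cs_s ?mem_head.
pose j0 := Ordinal lt_ps.
exists (fun j => d j + (if j == j0 then p.1 else 0)).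
under [RHS]eq_bigr do rewrite rmorphD mulrDl.
rewrite big_split addrC /=; congr (_ + _).
rewrite (bigD1 j0) //= eqxx nth_index ?cs_s ?mem_head // big1 ?addr0 // => j /negbTE ->.
by rewrite rmorph0 mul0r.
Qed.

Variable J : S -> Prop.
Hypothesis idealJ : is_ideal J.

Lemma spans_modP A :
  spans_mod iota J A <-> forall s, exists2 y, combination A y & J (s - y).
Proof.
split=> [spanA s | spanA s].
  by have [cs [csA Js]] := spanA s; exists (\sum_(p <- cs) iota p.1 * p.2) => //; exists cs.
by have [_ [cs [csA ->]] Js] := spanA s; exists cs.
Qed.

Lemma spans_mod_sub (A B : S -> Prop) :
  (forall y, A y -> B y) -> spans_mod iota J A -> spans_mod iota J B.
Proof.
by move=> AB spanA s; have [cs [csA Js]] := spanA s; exists cs; split=> // p /csA /AB.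
Qed.

Lemma spans_mod_notin A : spans_mod iota J A -> spans_mod iota J (fun y => A y /\ ~ J y).
Proof.
move=> spanA s; have [cs [csA Js]] := spanA s.
suff [ds [dsA Jcsds]] : exists ds : seq (k * S), (forall p, p \in ds -> A p.2 /\ ~ J p.2) /\
    J (\sum_(p <- cs) iota p.1 * p.2 - \sum_(p <- ds) iota p.1 * p.2).
  exists ds; split=> //; rewrite -[s](subrK (\sum_(p <- cs) iota p.1 * p.2)) -addrA.
  exact: idealD.
elim: cs csA {Js} => [|p cs IHcs] csA.
  by exists [::]; rewrite !big_nil subrr; split=> //; apply: ideal0.
have [|ds [dsA Jcsds]] := IHcs; first by move=> q q_cs; apply: csA; rewrite inE q_cs orbT.
have Ap : A p.2 by apply: csA; apply: mem_head.
have [Jp | notJp] := classic (J p.2).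
  exists ds; split=> //; rewrite big_cons -addrA; apply: idealD => //; exact: idealMl.
exists (p :: ds); split; last by rewrite !big_cons opprD addrACA subrr add0r.
by move=> q /[!inE] /predU1P[-> // | /dsA].
Qed.

Lemma indep_size_le (s s' : seq S) :
  uniq s -> spans_mod iota J (fun a => a \in s') -> indep_mod iota J (fun a => a \in s) ->
  (size s <= size s')%N.
Proof.
move=> uniq_s /spans_modP span' indep.
have [D JD] : exists D : S -> 'I_(size s') -> k,
    forall a, J (a - \sum_(j < size s') iota (D a j) * s'`_j).
  apply: (choice (fun a d => J (a - \sum_(j < size s') iota (d j) * s'`_j))) => a.
  by have [_ /combination_nth[d ->] Ja] := span' a; exists d.
rewrite leqNgt; apply/negP => lt_s'_s.
(* A kernel row of the coordinate matrix of s in s' is a nontrivial relation on s modulo J. *)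
pose M : 'M[k]_(size s, size s') := \matrix_(i, j) D s`_i j.
have [v v0 vM0] := exists_nonzero_kernel_row M lt_s'_s.
pose c a := \sum_(i < size s | index a s == i) v 0 i.
have c_nth (i : 'I_(size s)) : c s`_i = v 0 i.
  by rewrite /c (big_pred1 i) // => j; rewrite /= index_uniq // eq_sym.
have comb0 : \sum_(i < size s) iota (v 0 i) * \sum_(j < size s') iota (M i j) * s'`_j = 0.
  under eq_bigr do rewrite mulr_sumr.
  rewrite exchange_big /=; apply: big1 => j _.
  transitivity (iota ((v *m M) 0 j) * s'`_j); last by rewrite vM0 mxE rmorph0 mul0r.
  by rewrite mxE rmorph_sum mulr_suml; apply: eq_bigr => i _; rewrite rmorphM mulrA.
have Jv : J (\sum_(a <- s) iota (c a) * a).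
  rewrite (big_nth 0) big_mkord; under eq_bigr do rewrite c_nth.
  suff: J (\sum_(i < size s) iota (v 0 i) * s`_i -
            \sum_(i < size s) iota (v 0 i) * \sum_(j < size s') iota (M i j) * s'`_j).
    by rewrite comb0 subr0.
  rewrite -sumrB; apply: ideal_sum => // i _.
  rewrite -mulrBr; apply: (idealMl idealJ); under eq_bigr do rewrite mxE; exact: JD.
have c0 := indep s c uniq_s (fun a sa => sa) Jv.
by move/eqP: v0; apply; apply/rowP => i; rewrite mxE -c_nth c0 ?mem_nth.
Qed.

Lemma basis_mod_size (s s' : seq S) :
  basis_mod iota J s -> basis_mod iota J s' -> size s' = size s.
Proof.
case=> uniq_s span indep [uniq_s' span' indep'].
by apply/eqP; rewrite eqn_leq !indep_size_le.
Qed.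

End LinearAlgebraModIdeal.

Section BasisLifting.
Variables (k : fieldType) (S : comNzRingType) (iota : {rmorphism k -> S}).
Variables (I : S -> Prop) (l : nat) (f : 'I_l -> S).
Hypothesis idealI : is_ideal I.
Hypothesis f_span : forall s, exists c : 'I_l -> k, I (s - \sum_(i < l) iota (c i) * f i).
Hypothesis f_indep :
  forall c : 'I_l -> k, I (\sum_(i < l) iota (c i) * f i) -> forall i, c i = 0.

Lemma basis_coord_inj (c d : 'I_l -> k) :
  I (\sum_(i < l) iota (c i) * f i - \sum_(i < l) iota (d i) * f i) -> forall i, c i = d i.
Proof.
rewrite -sumrB; under eq_bigr do rewrite -mulrBl -rmorphB.
by move/f_indep => cd0 i; apply/eqP; rewrite -subr_eq0 cd0.
Qed.

Lemma lifting_of_basis : exists sigma, lifting I sigma /\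
  forall a, exists c : 'I_l -> k, sigma a = \sum_(i < l) iota (c i) * f i.
Proof.
have [C IC] := choice _ f_span.
pose sigma a := \sum_(i < l) iota (C a i) * f i.
exists sigma; split; last by move=> a; exists (C a).
split=> [a b Iab | a |].
- apply: eq_bigr => i _; congr (iota _ * _); apply: basis_coord_inj.
  have -> : sigma a - sigma b = (b - sigma b) - (a - sigma a) + (a - b) by ring.
  by apply: idealD => //; apply: idealB.
- by rewrite -opprB; apply: idealN.
- have := idealN idealI (IC 0); rewrite sub0r opprK => /f_indep C00.
  by apply: big1 => i _; rewrite C00 rmorph0 mul0r.
Qed.

End BasisLifting.

Lemma spans_mod_monomials (k : fieldType) (S : comNzRingType) (iota : {rmorphism k -> S})
    (n I : S -> Prop) r (x : 'I_r -> S) (G : monomial r -> Prop) l (f : 'I_l -> S) sigma t :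
  expandable n I x G -> lifting I sigma ->
  (forall a, exists c : 'I_l -> k, sigma a = \sum_(i < l) iota (c i) * f i) ->
  spans_mod iota (idpow n t) (fun y => exists i u, G u /\ y = f i * mon_eval u x).
Proof.
move=> expand lift sigma_f; apply/spans_modP => s.
have [[fu [fu_sigma fu_sum]] _] := expand sigma lift s.
have [F [FG F_t]] := fu_sum t.
exists (\sum_(u <- undup F) fu u * mon_eval u x); last first.
  by apply: F_t => [|u|u]; rewrite ?undup_uniq ?mem_undup //; apply: FG.
rewrite big_seq; apply: combination_sum => u /[!mem_undup] /FG Gu.
have [a ->] := fu_sigma u Gu; have [c ->] := sigma_f a.
rewrite mulr_suml; apply: combination_sum => i _; rewrite -mulrA.
by apply: combination_scale; exists i, u.
Qed.

Lemma generator_mem (S : comNzRingType) r (x : 'I_r -> S) (I : S -> Prop) :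
  generates x I -> forall j, I (x j).
Proof.
move=> genI j; apply/genI; exists (fun i => (i == j)%:R).
rewrite (bigD1 j) //= eqxx mul1r big1 ?addr0 // => i /negbTE ->.
by rewrite mul0r.
Qed.

Theorem corollary4p2 (k : fieldType) (S : comNzRingType) (iota : {rmorphism k -> S})
  (n : S -> Prop)
  (Hloc : is_local n) (Hnoeth : noetherian S) (Hcompl : adic_complete n)
  (Hcoef : coefficient_field iota n)
  (r : nat) (G : monomial r -> Prop) (HG : standard_set G)
  (I : S -> Prop) (HI : is_primary_for n I) (x : 'I_r -> S) (Hgen : generates x I)
  (Hexp : expandable n I x G)
  (l : nat) (f : 'I_l -> S)
  (Hfspan : forall s : S, exists c : 'I_l -> k, I (s - \sum_(i < l) iota (c i) * f i))
  (Hfindep : forall c : 'I_l -> k, I (\sum_(i < l) iota (c i) * f i) -> forall i, c i = 0)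
  (t : nat) (Ht : (0 < t)%N) :
  [/\ spans_mod iota (idpow n t) (A1 n f x G t),
      (forall y, A1 n f x G t y -> A2 n f x G t y) /\ spans_mod iota (idpow n t) (A2 n f x G t)
    & indep_mod iota (idpow n t) (A2 n f x G t) ->
      exists s : seq S, [/\ uniq s, (forall y, A2 n f x G t y <-> y \in s),
        basis_mod iota (idpow n t) s
        & forall s', basis_mod iota (idpow n t) s' -> size s' = size s]].
Proof.
have idealI : is_ideal I by case: HI => [[[]]].
have x_n j : n (x j) by apply/(proj2 HI); exists 1%N; rewrite expr1; apply: generator_mem Hgen j.
have idealnt : is_ideal (idpow n t) := idpow_ideal t.
have [sigma [lift sigma_f]] := lifting_of_basis idealI Hfspan Hfindep.
have span1 : spans_mod iota (idpow n t) (A1 n f x G t).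
  apply: spans_mod_sub (spans_mod_notin idealnt (spans_mod_monomials t Hexp lift sigma_f)).
  by move=> _ [[i [u [Gu ->]]] notin_t]; exists i, u.
have span2 := spans_mod_sub (@A1_sub_A2 _ _ _ _ f x G t) span1.
split=> // [|indep]; first by split=> // y; apply: A1_sub_A2.
have [s [uniq_s A2s]] := A2_finite f G t x_n.
have basis_s : basis_mod iota (idpow n t) s.
  split=> //; first by apply: spans_mod_sub span2 => y /A2s.
  by move=> s' c uniq_s' s's; apply: indep => // y /s's /A2s.
exists s; split=> // s' basis_s'; exact: (basis_mod_size idealnt basis_s basis_s').
Qed.
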